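(* Let $n \ge 1$ and $1 \le k \le n$. For the threshold function $T_k:\{0,1\}^n \to \{0,1\}$ defined by $T_k(x)=1$ if $|x| \ge k$ and $T_k(x)=0$ otherwise, the spectral sensitivity satisfies \[ \lambda(T_k) = \sqrt{k\,(n+1-k)}. \]
   Context: For $x\in\{0,1\}^n$, $|x|$ denotes the Hamming weight (number of ones) of $x$. For a Boolean function $f:\{0,1\}^n\to\{0,1\}$, the sensitivity graph of $f$ is the graph on vertex set $\{0,1\}^n$ in which $x$ and $y$ are adjacent if and only if $x$ and $y$ differ in exactly one coordinate and $f(x)\neq f(y)$. Let $A_f$ denote its adjacency matrix (a symmetric $0/1$ matrix indexed by $\{0,1\}^n$). The spectral sensitivity of $f$ is $\lambda(f)=\|A_f\| = \max_{v:\|v\|_2=1}\|A_f v\|_2$, the spectral norm of $A_f$ (equivalently its largest eigenvalue). *)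

From HB Require Import structures.
From mathcomp Require Import all_boot all_order all_algebra.
From mathcomp Require Import classical_sets reals.
Set Implicit Arguments. Unset Strict Implicit. Unset Printing Implicit Defensive.
Import Order.TTheory GRing.Theory Num.Theory.
Local Open Scope ring_scope.

Definition cube (n : nat) := {ffun 'I_n -> bool}.

Definition hweight (n : nat) (x : cube n) : nat := #|[set i | x i]|.

Definition hneighbor (n : nat) (x y : cube n) : bool :=
  #|[set i | x i != y i]| == 1%N.

Definition sens_adj (R : pzRingType) (n : nat) (f : cube n -> bool)
  (x y : cube n) : R :=
  if hneighbor x y && (f x != f y) then 1 else 0.

Definition l2norm (R : rcfType) (n : nat) (v : cube n -> R) : R :=
  Num.sqrt (\sum_x v x ^+ 2).

Definition sens_apply (R : pzRingType) (n : nat) (f : cube n -> bool)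
  (v : cube n -> R) : cube n -> R :=
  fun x => \sum_y sens_adj R f x y * v y.

Definition spectral_sensitivity (R : realType) (n : nat) (f : cube n -> bool) : R :=
  sup [set r : R | exists v : cube n -> R,
         l2norm v = 1 /\ r = l2norm (sens_apply f v)].

Definition threshold (n k : nat) (x : cube n) : bool := (k <= hweight x)%N.

From mathcomp Require Import all_boot all_order all_algebra.
From mathcomp Require Import boolp classical_sets reals.
From mathcomp Require Import zify ring.
Set Implicit Arguments. Unset Strict Implicit. Unset Printing Implicit Defensive.
Import Order.TTheory GRing.Theory Num.Theory.
Local Open Scope ring_scope.

(* The sensitivity graph of T_k is the bipartite graph between the layers of
   weight k and k - 1, biregular with degrees k and n + 1 - k.  Upper bound:
   Cauchy-Schwarz weighted by degrees (the Schur test) gives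
   |A v|^2 <= sum_y v_y^2 sum_{x ~ y} deg x = k (n + 1 - k) |v|^2, since every
   neighbour of a vertex of degree k has degree n + 1 - k and conversely.
   Lower bound: the indicator u of the weight-k layer satisfies
   A u = (n + 1 - k) 1_{layer k-1}, and double counting the edges gives
   |A u|^2 = k (n + 1 - k) |u|^2. *)

Section Cube.
Variable n : nat.
Implicit Types x y : cube n.

Definition flip x (i : 'I_n) : cube n := [ffun j => if j == i then ~~ x i else x j].

Lemma hneighbor_flip x i : hneighbor x (flip x i).
Proof.
rewrite /hneighbor; have -> : [set j | x j != flip x i j] = [set i].
  apply/setP => j; rewrite !inE ffunE.
  by case: (j =P i) => [->|_]; [case: (x i) | rewrite eqxx].
by rewrite cards1.
Qed.

Lemma hneighborP x y : hneighbor x y -> exists i, y = flip x i.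
Proof.
move=> /cards1P [i xy_i]; exists i; apply/ffunP => j; rewrite ffunE.
have := congr1 (fun A : {set 'I_n} => j \in A) xy_i; rewrite !inE /=.
by case: (j =P i) => [->|_] /=; [case: (x i); case: (y i) | case: (x j); case: (y j)].
Qed.

Lemma flip_inj x : injective (flip x).
Proof.
move=> i j /ffunP /(_ i); rewrite !ffunE eqxx.
by case: eqP => // _; case: (x i).
Qed.

Lemma sum_hneighbor (V : nmodType) x (F : cube n -> V) :
  \sum_(y | hneighbor x y) F y = \sum_i F (flip x i).
Proof.
rewrite -[RHS](big_imset _ (in2W (@flip_inj x))) /=.
apply: eq_bigl => y; apply/idP/imsetP => [/hneighborP [i ->]|[i _ ->]].
  by exists i.
exact: hneighbor_flip.
Qed.

Lemma hweight_flip_true x i : x i -> hweight (flip x i) = (hweight x).-1.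
Proof.
move=> xi; rewrite /hweight (cardsD1 i [set j | x j]) inE xi add1n /=.
apply: eq_card => j; rewrite !inE ffunE.
by case: eqP => [->|_]; rewrite ?xi ?eqxx.
Qed.

Lemma hweight_flip_false x i : ~~ x i -> hweight (flip x i) = (hweight x).+1.
Proof.
move=> xi; rewrite /hweight.
have -> : [set j | flip x i j] = i |: [set j | x j].
  by apply/setP => j; rewrite !inE ffunE; case: (j =P i) => [->|_] //=; case: (x i) xi.
by rewrite cardsU1 inE xi.
Qed.

Lemma hweight_gt0 x i : x i -> (0 < hweight x)%N.
Proof. by move=> xi; apply/card_gt0P; exists i; rewrite inE. Qed.

Lemma exists_hweight w : (w <= n)%N -> exists x, hweight x = w.
Proof.
move=> le_wn; exists [ffun i : 'I_n => (i < w)%N]; rewrite /hweight.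
have -> : [set i | [ffun i : 'I_n => (i < w)%N] i] = widen_ord le_wn @: 'I_w.
  apply/setP => i; rewrite inE ffunE; apply/idP/imsetP => [lt_iw|[j _ ->]] /=.
    by exists (Ordinal lt_iw) => //; apply: val_inj.
  by case: j.
by rewrite card_imset ?card_ord // => a b /(congr1 val) /= /val_inj.
Qed.

Lemma sum_coord_true (R : pzSemiRingType) x : \sum_i (x i)%:R = (hweight x)%:R :> R.
Proof.
rewrite /hweight -sum1_card natr_sum [RHS]big_mkcond /=.
by apply: eq_bigr => j _; rewrite inE; case: (x j).
Qed.

Lemma sum_coord_false (R : pzSemiRingType) x :
  \sum_i (~~ x i)%:R = (n - hweight x)%:R :> R.
Proof.
have -> : (n - hweight x)%N = #|~: [set j | x j]|.
  by have := cardsC [set j | x j]; rewrite card_ord /hweight; lia.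
rewrite -sum1_card natr_sum [RHS]big_mkcond /=.
by apply: eq_bigr => j _; rewrite !inE; case: (x j).
Qed.

End Cube.

Section SensitivityGraph.
Variables (R : numDomainType) (n : nat) (f : cube n -> bool).
Local Notation A := (@sens_adj R n f).

Lemma sens_adj_ge0 x y : 0 <= A x y.
Proof. by rewrite /sens_adj; case: ifP. Qed.

Lemma sens_adjC x y : A x y = A y x.
Proof.
rewrite /sens_adj /hneighbor [f y == _]eq_sym.
suff -> : [set i | y i != x i] = [set i | x i != y i] by [].
by apply/setP => i; rewrite !inE eq_sym.
Qed.

Lemma sum_sens_adj x (G : cube n -> R) :
  \sum_y A x y * G y = \sum_i (f x != f (flip x i))%:R * G (flip x i).
Proof.
rewrite -(sum_hneighbor x (fun y => (f x != f y)%:R * G y)) [RHS]big_mkcond /=.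
apply: eq_bigr => y _.
by rewrite /sens_adj; case: (hneighbor x y); case: (f x != f y); rewrite ?mul1r ?mul0r.
Qed.

Lemma sum_sens_apply v :
  \sum_x sens_apply f v x = \sum_y (\sum_x A y x) * v y.
Proof.
rewrite exchange_big /=; apply: eq_bigr => y _.
by rewrite mulr_suml; apply: eq_bigr => x _; rewrite sens_adjC.
Qed.

End SensitivityGraph.

Lemma weighted_sqr_sum_le (R : realFieldType) (I : finType) (a v : I -> R) :
  (forall i, 0 <= a i) ->
  (\sum_i a i * v i) ^+ 2 <= (\sum_i a i) * (\sum_i a i * v i ^+ 2).
Proof.
move=> a_ge0; set S := \sum_i a i; set T := \sum_i a i * v i.
set Q := \sum_i a i * v i ^+ 2.
have sum_dev : \sum_i a i * (S * v i - T) ^+ 2 = S * (S * Q - T ^+ 2).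
  transitivity (\sum_i (S ^+ 2 * (a i * v i ^+ 2) - (2 * S * T) * (a i * v i) + T ^+ 2 * a i)).
    by apply: eq_bigr => i _; ring.
  rewrite big_split sumrB /= -!mulr_sumr -/S -/T -/Q; ring.
have dev_ge0 : 0 <= S * (S * Q - T ^+ 2).
  by rewrite -sum_dev; apply: sumr_ge0 => i _; rewrite mulr_ge0 ?sqr_ge0.
have [S_gt0|S_eq0] : 0 < S \/ S = 0.
- by case: (ltrgt0P S) (sumr_ge0 _ (fun i _ => a_ge0 i) : 0 <= S) => // [|->]; auto.
- by move: dev_ge0; rewrite pmulr_rge0 // subr_ge0.
have a0 i : a i = 0.
  by apply/eqP; move/eqP: S_eq0; rewrite psumr_eq0 // => /allP/(_ i (mem_index_enum i)).
by rewrite /T big1 ?S_eq0 ?expr0n ?mul0r // => i _; rewrite a0 mul0r.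
Qed.

Lemma schur_test (R : realFieldType) (I : finType) (A : I -> I -> R) (v : I -> R) (K : R) :
  (forall x y, 0 <= A x y) ->
  (forall y, \sum_x A x y * (\sum_z A x z) <= K) ->
  \sum_x (\sum_y A x y * v y) ^+ 2 <= K * \sum_y v y ^+ 2.
Proof.
move=> A_ge0 col_le.
apply: le_trans (_ : \sum_x (\sum_z A x z) * (\sum_y A x y * v y ^+ 2) <= _).
  by apply: ler_sum => x _; apply: weighted_sqr_sum_le.
rewrite mulr_sumr; under eq_bigr do rewrite mulr_sumr.
rewrite exchange_big /=; apply: ler_sum => y _.
have -> : \sum_x (\sum_z A x z) * (A x y * v y ^+ 2) =
          (\sum_x A x y * (\sum_z A x z)) * v y ^+ 2.
  by rewrite mulr_suml; apply: eq_bigr => x _; ring.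
by rewrite ler_wpM2r ?sqr_ge0 ?col_le.
Qed.

Lemma l2normZ (R : rcfType) n (c : R) (v : cube n -> R) :
  l2norm (fun x => c * v x) = `|c| * l2norm v.
Proof.
rewrite /l2norm -sqrtr_sqr -sqrtrM ?sqr_ge0 // mulr_sumr.
by congr Num.sqrt; apply: eq_bigr => x _; rewrite exprMn.
Qed.

Lemma sens_applyZ (R : comPzRingType) n (f : cube n -> bool) (c : R) (v : cube n -> R) x :
  sens_apply f (fun y => c * v y) x = c * sens_apply f v x.
Proof.
by rewrite /sens_apply mulr_sumr; apply: eq_bigr => y _; rewrite mulrCA.
Qed.

Lemma sup_attained (R : realType) (E : set R) (s : R) : E s -> ubound E s -> sup E = s.
Proof.
move=> Es ubs; apply/eqP; rewrite eq_le ge_sup //=; last by exists s.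
by apply: sup_upper_bound => //; split; exists s.
Qed.

Section Threshold.
Variables (R : realType) (n k : nat).
Hypotheses (k_gt0 : (0 < k)%N) (k_le_n : (k <= n)%N).
Implicit Types x y : cube n.
Local Notation f := (@threshold n k).
Local Notation A := (@sens_adj R n f).
Local Notation K := ((k * (n + 1 - k))%:R : R).

Lemma threshold_flip x i : (f x != f (flip x i)) =
  ((hweight x == k) && x i) || ((hweight x == k.-1) && ~~ x i).
Proof.
rewrite /threshold; case: (boolP (x i)) => xi /=.
  have := hweight_gt0 xi; rewrite hweight_flip_true // andbT andbF orbF.
  by move=> ?; apply/idP/idP; lia.
by rewrite hweight_flip_false // andbF andbT; apply/idP/idP; lia.
Qed.

Lemma sum_threshold_adj_weight (G : nat -> R) x :
  \sum_y A x y * G (hweight y) =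
  if hweight x == k then k%:R * G k.-1
  else if hweight x == k.-1 then (n + 1 - k)%:R * G k else 0.
Proof.
rewrite sum_sens_adj; case: (hweight x =P k) => [wk|nwk].
  transitivity (\sum_i (x i)%:R * G k.-1); last by rewrite -mulr_suml sum_coord_true wk.
  apply: eq_bigr => i _; rewrite threshold_flip wk eqxx (_ : (k == k.-1) = false) ?orbF; last by lia.
  by case: (boolP (x i)) => xi; rewrite ?mul0r // hweight_flip_true // wk.
case: (hweight x =P k.-1) => [wk|nwk1].
  transitivity (\sum_i (~~ x i)%:R * G k).
    apply: eq_bigr => i _; rewrite threshold_flip wk eqxx (_ : (k.-1 == k) = false) //; last by lia.
    case: (boolP (x i)) => xi; rewrite ?mul0r // hweight_flip_false // wk.
    by rewrite prednK.
  by rewrite -mulr_suml sum_coord_false wk; congr (_%:R * _); lia.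
rewrite big1 // => i _; rewrite threshold_flip.
by move/eqP/negbTE: nwk => ->; move/eqP/negbTE: nwk1 => ->; rewrite mul0r.
Qed.

Definition threshold_degree (w : nat) : R :=
  (if w == k then k else if w == k.-1 then n + 1 - k else 0)%N%:R.

Lemma threshold_degreeE x : \sum_y A x y = threshold_degree (hweight x).
Proof.
have := sum_threshold_adj_weight (fun=> 1) x; under eq_bigr do rewrite mulr1.
move=> ->; rewrite /threshold_degree.
by case: (hweight x == k); last case: (hweight x == k.-1); rewrite ?mulr1.
Qed.

Lemma threshold_schur_bound y : \sum_x A x y * (\sum_z A x z) <= K.
Proof.
under eq_bigr do rewrite threshold_degreeE sens_adjC.
rewrite sum_threshold_adj_weight /threshold_degree natrM.
have [km1_k k_km1] : (k.-1 == k) = false /\ (k == k.-1) = false by split; lia.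
case: eqP => _; first by rewrite km1_k eqxx.
case: eqP => _; last by rewrite mulr_ge0 ?ler0n.
by rewrite eqxx mulrC.
Qed.

Lemma threshold_norm_le v : l2norm (sens_apply f v) <= Num.sqrt K * l2norm v.
Proof.
rewrite /l2norm -sqrtrM ?ler0n // ler_sqrt; last first.
  by rewrite mulr_ge0 ?ler0n ?sumr_ge0 // => y _; apply: sqr_ge0.
exact: schur_test (@sens_adj_ge0 R n f) threshold_schur_bound.
Qed.

Let top_layer y : R := (hweight y == k)%:R.

Lemma sens_apply_top_layer x :
  sens_apply f top_layer x = (hweight x == k.-1)%:R * (n + 1 - k)%:R.
Proof.
rewrite /sens_apply (sum_threshold_adj_weight (fun w => (w == k)%:R)).
have km1_k : (k.-1 == k) = false by lia.
rewrite km1_k eqxx mulr0 mulr1.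
case: eqP => [->|_]; first by rewrite (negbTE (_ : k != k.-1)) ?mul0r //; lia.
by case: eqP; rewrite ?mul1r ?mul0r.
Qed.

Lemma top_layer_sqr_norm :
  \sum_x sens_apply f top_layer x ^+ 2 = K * \sum_y top_layer y ^+ 2.
Proof.
have bool_sqr (b : bool) : (b%:R : R) ^+ 2 = b%:R by case: b; rewrite ?expr1n ?expr0n.
pose M : R := \sum_(x : cube n) (hweight x == k.-1)%:R.
set N := \sum_y top_layer y.
have edge_count : M * (n + 1 - k)%:R = N * k%:R.
  have := sum_sens_apply f top_layer.
  under eq_bigr do rewrite sens_apply_top_layer.
  under [RHS]eq_bigr do rewrite threshold_degreeE.
  rewrite -mulr_suml -/M => ->; rewrite /N mulr_suml; apply: eq_bigr => y _.
  by rewrite /top_layer /threshold_degree; case: eqP => _; rewrite ?mulr1 ?mul1r ?mulr0 ?mul0r.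
under eq_bigr do rewrite sens_apply_top_layer exprMn bool_sqr.
under [in RHS]eq_bigr do rewrite bool_sqr.
by rewrite -mulr_suml -/M -/N expr2 mulrA edge_count natrM; ring.
Qed.

Lemma threshold_norm_attained :
  exists v, l2norm v = 1 /\ l2norm (sens_apply f v) = Num.sqrt K.
Proof.
set s := l2norm top_layer.
have s_gt0 : 0 < s.
  have [y0 wy0] := exists_hweight k_le_n.
  rewrite sqrtr_gt0 (bigD1 y0) //= /top_layer wy0 eqxx expr1n.
  by rewrite ltr_pwDl ?ltr01 // sumr_ge0 // => y _; apply: sqr_ge0.
exists (fun y => s^-1 * top_layer y); split.
  by rewrite l2normZ ger0_norm ?invr_ge0 ?ltW // mulVf ?gt_eqF.
have -> : sens_apply f (fun y => s^-1 * top_layer y) = (fun x => s^-1 * sens_apply f top_layer x).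
  by apply: funext => x; apply: sens_applyZ.
rewrite l2normZ /l2norm top_layer_sqr_norm sqrtrM ?ler0n // -/(l2norm top_layer) -/s.
by rewrite ger0_norm ?invr_ge0 ?ltW // mulrCA mulVf ?mulr1 ?gt_eqF.
Qed.

End Threshold.

Theorem mainTheorem1 (R : realType) (n k : nat) (hn : (1 <= n)%N)
  (hk1 : (1 <= k)%N) (hkn : (k <= n)%N) :
  spectral_sensitivity R (@threshold n k) = Num.sqrt ((k * (n + 1 - k))%:R : R).
Proof.
apply: sup_attained.
  have [v [v_unit Av]] := threshold_norm_attained R hk1 hkn.
  by exists v.
move=> _ [v [v_unit ->]].
by have := threshold_norm_le hk1 hkn v; rewrite v_unit mulr1.
Qed.
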